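(* Let $l=\sum_{i=4}^8 m_ie_i$ with $m_i\in\mathbb Z$ and $\sum_{i=4}^8m_i$ even (these are exactly the vectors of $E_8$ orthogonal to $L_3=\langle e_2+e_1,e_3-e_2,e_2-e_1\rangle_\mathbb Z\cong A_3$). Then $l$ is orthogonal to exactly $12$ roots of $E_8$ if and only if (i) $m_j\ne0$ for every $j$; (ii) $m_i\ne\pm m_j$ for all $4\le i<j\le 8$; (iii) $\sum_{i=4}^8\pm m_i\ne0$ for every choice of signs. Moreover, $l$ is orthogonal to exactly $14$ roots of $E_8$ if (i) and (iii) hold and there is exactly one pair $4\le i<j\le8$ with $m_i=\pm m_j$.
   Context: $e_1,\dots,e_8$ is an orthonormal basis of $\mathbb R^8$ and $E_8=\{x\in\mathbb Z^8\cup(\mathbb Z+\tfrac12)^8\mid \sum_i x_i\in2\mathbb Z\}$; its roots (vectors of square $2$) are the $112$ vectors $\pm e_i\pm e_j$ ($i<j$) and the $128$ vectors $\frac12\sum_{i=1}^8(-1)^{\nu_i}e_i$ with $\sum\nu_i$ even. *)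

From mathcomp Require Import all_boot all_order all_algebra.
Set Implicit Arguments. Unset Strict Implicit. Unset Printing Implicit Defensive.
Import Order.TTheory GRing.Theory Num.Theory.
Local Open Scope ring_scope.

(* Vectors of R^8 with rational coordinates (all vectors of interest, E8 and its
   roots, have rational coordinates); coordinate i : 'I_8 is e_{i+1}. *)
Definition vec8 := 'I_8 -> rat.

Definition dot8 (x y : vec8) : rat := \sum_(i < 8) x i * y i.

Definition inE8 (x : vec8) : bool :=
  ([forall i, x i \is a Num.int] || [forall i, x i - 1/2 \is a Num.int])
  && ((\sum_(i < 8) x i) / 2 \is a Num.int).

Definition isE8root (x : vec8) : bool := inE8 x && (dot8 x x == 2).

(* Every root has coordinates in {-1,-1/2,0,1/2,1}; we enumerate such vectors
   through codes c : 'I_8 -> 'I_5 (coordinate c_i/2 - 1). This encoding is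
   injective, so counting codes = counting roots. *)
Definition code_vec (c : {ffun 'I_8 -> 'I_5}) : vec8 :=
  fun i => (c i)%:R / 2 - 1.

Definition n_orth_roots (l : vec8) : nat :=
  #|[set c : {ffun 'I_8 -> 'I_5} |
      isE8root (code_vec c) && (dot8 (code_vec c) l == 0)]|.

(* l = sum_{i=4}^8 m_i e_i, with m indexed by 'I_5 (m j is m_{j+4}) *)
Definition lvec (m : 'I_5 -> int) : vec8 :=
  fun i => if (3 <= i)%N then (m (inord (i - 3)))%:~R else 0.

Definition cond_i (m : 'I_5 -> int) : Prop := forall j, m j != 0.
Definition cond_ii (m : 'I_5 -> int) : Prop :=
  forall i j : 'I_5, (i < j)%N -> m i != m j /\ m i != - m j.
Definition cond_iii (m : 'I_5 -> int) : Prop :=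
  forall s : 'I_5 -> bool, \sum_(i < 5) (if s i then - m i else m i) != 0.
Definition exactly_one_pair (m : 'I_5 -> int) : Prop :=
  #|[set p : 'I_5 * 'I_5 | (p.1 < p.2)%N && ((m p.1 == m p.2) || (m p.1 == - m p.2))]| = 1%N.

From mathcomp Require Import all_boot all_order all_algebra.
From mathcomp Require Import ring zify.
Import Order.TTheory GRing.Theory Num.Theory.
Local Open Scope ring_scope.

(* Every root of E8 has coordinates in {0, ±1/2, ±1}, so the roots form an
   explicit finite list, and whether a root is orthogonal to l depends only on
   its last five coordinates.  Sorted by these, the 240 roots are:
   - 12 roots vanishing there (the roots of L3), orthogonal to every l;
   - 60 roots ±e_i ± e_j with i <= 3 < j, twelve for each j, orthogonal iff
     m_j = 0;
   - 40 roots with 4 <= i < j: ±(e_i - e_j), orthogonal iff m_i = m_j, and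
     ±(e_i + e_j), orthogonal iff m_i = -m_j;
   - 128 half-integral roots, four for each sign vector (±1/2, ..., ±1/2),
     orthogonal iff the signed sum of the m_i vanishes.
   So l is orthogonal to 12 + 12 z + 2 p + 4 s roots (z zero coordinates, p
   coincidences m_i = ±m_j, s vanishing signed sums), which is 12 exactly when
   z = p = s = 0.  Under (i), m_i = m_j and m_i = -m_j exclude each other, so a
   single such pair gives 14. *)

Lemma intr_div_natr_int (R : archiNumFieldType) (y : int) (d : nat) : (0 < d)%N ->
  (y%:~R / d%:R : R) \is a Num.int = (d%:Z %| y)%Z.
Proof.
move=> d_gt0; have d_neq0 : d%:R != 0 :> R by rewrite pnatr_eq0 -lt0n.
apply/intrP/dvdzP => [[n /(canRL (divfK d_neq0))] | [k ->]].
  by rewrite -[d%:R]/(d%:Z%:~R : R) -intrM => /intr_inj ->; exists n.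
by exists k; rewrite intrM mulfK.
Qed.

Definition code_seq (c : {ffun 'I_8 -> 'I_5}) : seq nat := [seq val (c i) | i <- enum 'I_8].

Lemma size_code_seq c : size (code_seq c) = 8%N.
Proof. by rewrite size_map size_enum_ord. Qed.

Lemma nth_code_seq c (i : 'I_8) : nth 0%N (code_seq c) i = c i.
Proof. by rewrite (nth_map i) ?size_enum_ord // nth_ord_enum. Qed.

Lemma all_code_seq (p : pred nat) c : all p (code_seq c) = [forall i, p (c i)].
Proof.
rewrite all_map; apply/allP/forallP => [p_c i | p_c i _]; last exact: p_c.
exact/p_c/mem_enum.
Qed.

Lemma big_code_seq (R : nmodType) (F : nat -> R) c :
  \sum_(x <- code_seq c) F x = \sum_(i < 8) F (c i).
Proof. by rewrite big_map big_enum. Qed.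

Lemma code_seq_inj : injective code_seq.
Proof.
move=> c1 c2 eq_c; apply/ffunP => i; apply: val_inj.
by have := congr1 (nth 0%N ^~ i) eq_c; rewrite /= !nth_code_seq.
Qed.

Lemma code_vecE c i : code_vec c i = ((c i)%:Z - 2)%:~R / 2.
Proof. by rewrite /code_vec intrB; field. Qed.

Lemma code_vec_int c i : (code_vec c i \is a Num.int) = ~~ odd (c i).
Proof.
rewrite code_vecE intr_div_natr_int //.
by case: (c i) => [[|[|[|[|[|?]]]]] ?].
Qed.

Lemma code_vec_half_int c i : (code_vec c i - 1/2 \is a Num.int) = odd (c i).
Proof.
have -> : code_vec c i - 1/2 = ((c i)%:Z - 3)%:~R / 2%:R.
  by rewrite /code_vec intrB; field.
rewrite intr_div_natr_int //.
by case: (c i) => [[|[|[|[|[|?]]]]] ?].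
Qed.

Lemma sum_code_vec_half_int c :
  ((\sum_(i < 8) code_vec c i) / 2 \is a Num.int) = (4 %| sumn (code_seq c))%N.
Proof.
have -> : \sum_(i < 8) code_vec c i = (sumn (code_seq c))%:R / 2 - 8.
  have -> : 8 = \sum_(i < 8) 1 :> rat by rewrite sumr_const card_ord.
  by rewrite sumnE big_code_seq natr_sum mulr_suml -sumrB.
have -> : ((sumn (code_seq c))%:R / 2 - 8) / 2 =
          ((sumn (code_seq c))%:Z - 16)%:~R / 4%:R :> rat.
  by rewrite intrB; field.
by rewrite intr_div_natr_int // rpredBr.
Qed.

(* [(x - 2) + (2 - x)] is [|x - 2|] in [nat], so [code_norm s] is four times
   the squared norm of the vector with codes [s]. *)
Definition code_norm (s : seq nat) : nat :=
  sumn [seq ((x - 2) + (2 - x)) ^ 2 | x <- s]%N.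

Lemma dot8_code_vec_self c :
  dot8 (code_vec c) (code_vec c) = (code_norm (code_seq c))%:R / 4.
Proof.
rewrite /dot8 /code_norm sumnE big_map big_code_seq natr_sum mulr_suml.
apply: eq_bigr => i _; rewrite /code_vec.
by case: (c i) => [[|[|[|[|[|?]]]]] ?] //=; field.
Qed.

Definition is_root_code (s : seq nat) : bool :=
  [&& all (fun x => ~~ odd x) s || all odd s, 4 %| sumn s & code_norm s == 8]%N.

Lemma isE8root_code c : isE8root (code_vec c) = is_root_code (code_seq c).
Proof.
have four_neq0 : 4 != 0 :> rat by [].
rewrite /isE8root /inE8 /is_root_code !all_code_seq.
rewrite dot8_code_vec_self sum_code_vec_half_int.
rewrite (eq_forallb (code_vec_int c)) (eq_forallb (code_vec_half_int c)) -andbA.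
by rewrite (can2_eq (divfK four_neq0) (mulfK four_neq0)) -natrM eqr_nat.
Qed.

(* Twice the inner product with [lvec m] of a vector whose last five codes are [t]. *)
Definition tail_dot (m : 'I_5 -> int) (t : seq nat) : int :=
  \sum_(j < 5) ((nth 0%N t j)%:Z - 2) * m j.

Definition orth_code (m : 'I_5 -> int) (t : seq nat) : bool := tail_dot m t == 0.

Lemma dot8_code_vec_lvec c m :
  (dot8 (code_vec c) (lvec m) == 0) = orth_code m (drop 3 (code_seq c)).
Proof.
have -> : dot8 (code_vec c) (lvec m) = (tail_dot m (drop 3 (code_seq c)))%:~R / 2.
  rewrite /dot8 (@big_split_ord _ _ _ 3 5) /= big1 ?add0r => [|i _]; last first.
    by rewrite /lvec /= leqNgt ltn_ord mulr0.
  rewrite rmorph_sum mulr_suml; apply: eq_bigr => j _.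
  rewrite /lvec /= addKn inord_val nth_drop.
  by rewrite -[(3 + j)%N]/(val (rshift 3 j)) nth_code_seq code_vecE intrM mulrAC.
by rewrite /orth_code mulf_eq0 invr_eq0 intr_eq0 orbF.
Qed.

Fixpoint words {T : Type} (vs : seq T) (n : nat) : seq (seq T) :=
  if n is n'.+1 then [seq x :: w | x <- vs, w <- words vs n'] else [:: [::]].

Lemma mem_words (T : eqType) (vs : seq T) n w :
  (w \in words vs n) = (size w == n) && all (mem vs) w.
Proof.
elim: n w => [|n IHn] [|x w] //=; first by apply/negbTE/allpairsP => -[[? ?] []].
rewrite eqSS; apply/allpairsP/and3P => [[[y w'] [/= y_vs w'_n [-> ->]]] | ].
  by move: w'_n; rewrite IHn => /andP[-> ->].
by move=> [w_n x_vs w_vs]; exists (x, w); rewrite IHn w_n w_vs.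
Qed.

Lemma uniq_words (T : eqType) (vs : seq T) n : uniq vs -> uniq (words vs n).
Proof.
move=> vs_uniq; elim: n => [|n IHn] //=.
by apply: allpairs_uniq => // -[x1 w1] [x2 w2] _ _ [-> ->].
Qed.

Lemma perm_code_seq_words :
  perm_eq (map code_seq (enum {ffun 'I_8 -> 'I_5})) (words (iota 0 5) 8).
Proof.
apply: uniq_perm; first by rewrite map_inj_uniq ?enum_uniq //; exact: code_seq_inj.
  exact/uniq_words/iota_uniq.
move=> w; rewrite mem_words; apply/mapP/andP => [[c _ ->] | [/eqP w_8 /allP w_lt5]].
  have c_lt5 (i : 'I_8) : (c i : nat) \in iota 0 5 by rewrite mem_iota ltn_ord.
  by rewrite size_code_seq all_code_seq; split=> //; apply/forallP.
exists [ffun i : 'I_8 => inord (nth 0%N w i)]; first by rewrite mem_enum.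
apply: (@eq_from_nth _ 0%N); first by rewrite size_code_seq w_8.
move=> k; rewrite w_8 => k_lt8.
have : nth 0%N w k \in iota 0 5 by apply: w_lt5; rewrite mem_nth ?w_8.
rewrite mem_iota => /= w_k.
by rewrite -[k]/(val (Ordinal k_lt8)) nth_code_seq ffunE inordK.
Qed.

Lemma n_orth_roots_words m : n_orth_roots (lvec m) =
  count (fun s => is_root_code s && orth_code m (drop 3 s)) (words (iota 0 5) 8).
Proof.
rewrite /n_orth_roots cardE /enum_mem size_filter.
rewrite -(permP perm_code_seq_words) count_map enumT.
by apply: eq_count => c; rewrite /= inE isE8root_code dot8_code_vec_lvec.
Qed.

Definition zero_tail : seq nat := nseq 5 2%N.
Definition unit_tail (j x : nat) : seq nat := set_nth 0%N zero_tail j x.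
Definition pair_tail (a b x y : nat) : seq nat := set_nth 0%N (unit_tail a x) b y.
Definition pair_tails_at (a b : nat) : seq (seq nat) :=
  if (a < b)%N then
    [:: pair_tail a b 4 0; pair_tail a b 0 4; pair_tail a b 4 4; pair_tail a b 0 0]
  else [::].

Definition single_tails : seq (seq nat) :=
  flatten [seq nseq 6 (unit_tail j 4) ++ nseq 6 (unit_tail j 0) | j <- iota 0 5].
Definition pair_tails : seq (seq nat) :=
  flatten [seq pair_tails_at a b | a <- iota 0 5, b <- iota 0 5].
Definition half_tails : seq (seq nat) :=
  flatten [seq nseq 4 t | t <- words [:: 1; 3]%N 5].

(* The census of the header, decided by evaluation over all 5^8 codes. *)
Lemma root_code_tails :
  perm_eq [seq drop 3 s | s <- words (iota 0 5) 8 & is_root_code s]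
          (nseq 12 zero_tail ++ single_tails ++ pair_tails ++ half_tails).
Proof. by vm_compute. Qed.

Lemma tail_dot_set_nth m t (j : 'I_5) x :
  tail_dot m (set_nth 0%N t j x) = tail_dot m t + (x%:Z - (nth 0%N t j)%:Z) * m j.
Proof.
rewrite /tail_dot (bigD1 j) // [in RHS](bigD1 j) //= nth_set_nth /= eqxx.
rewrite (eq_bigr (fun i : 'I_5 => ((nth 0%N t i)%:Z - 2) * m i)); first by ring.
by move=> k; rewrite nth_set_nth /= (inj_eq val_inj) => /negbTE ->.
Qed.

Lemma tail_dot_zero_tail m : tail_dot m zero_tail = 0.
Proof. by rewrite /tail_dot big1 // => j _; rewrite nth_nseq ltn_ord subrr mul0r. Qed.

Lemma tail_dot_unit_tail m (j : 'I_5) x : tail_dot m (unit_tail j x) = (x%:Z - 2) * m j.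
Proof. by rewrite tail_dot_set_nth tail_dot_zero_tail nth_nseq ltn_ord add0r. Qed.

Lemma tail_dot_pair_tail m (a b : 'I_5) x y : a != b ->
  tail_dot m (pair_tail a b x y) = (x%:Z - 2) * m a + (y%:Z - 2) * m b.
Proof.
move=> a_neq_b; rewrite tail_dot_set_nth tail_dot_unit_tail nth_set_nth /=.
by rewrite eq_sym (inj_eq val_inj) (negbTE a_neq_b) nth_nseq ltn_ord.
Qed.

Lemma count_flatten_sum (T : Type) (p : pred T) (ss : seq (seq T)) :
  count p (flatten ss) = (\sum_(s <- ss) count p s)%N.
Proof. by rewrite count_flatten sumnE big_map. Qed.

Lemma count_orth_single_tails m :
  count (orth_code m) single_tails = (12 * \sum_(j < 5) (m j == 0))%N.
Proof.
rewrite count_flatten_sum big_map big_distrr.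
rewrite -[iota 0 5]/(index_iota 0 5) big_mkord; apply: eq_bigr => j _.
rewrite count_cat !count_nseq /orth_code !tail_dot_unit_tail !mulf_eq0 /=.
by case: (m j == 0).
Qed.

Lemma count_orth_pair_tails m : count (orth_code m) pair_tails =
  (2 * \sum_(p : 'I_5 * 'I_5 | (p.1 < p.2)%N) ((m p.1 == m p.2) + (m p.1 == - m p.2)))%N.
Proof.
rewrite count_flatten_sum big_allpairs_dep -[iota 0 5]/(index_iota 0 5) big_mkord /=.
under eq_bigr do rewrite big_mkord.
rewrite pair_bigA big_distrr [RHS]big_mkcond; apply: eq_bigr => -[a b] _ /=.
rewrite /pair_tails_at; case: ltnP => [a_lt_b | //].
have a_neq_b : a != b by rewrite neq_ltn a_lt_b.
rewrite /= /orth_code !tail_dot_pair_tail //.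
have -> : (4%:Z - 2) * m a + (0%:Z - 2) * m b == 0 = (m a == m b) by apply/eqP/eqP; lia.
have -> : (0%:Z - 2) * m a + (4%:Z - 2) * m b == 0 = (m a == m b) by apply/eqP/eqP; lia.
have -> : (4%:Z - 2) * m a + (4%:Z - 2) * m b == 0 = (m a == - m b) by apply/eqP/eqP; lia.
have -> : (0%:Z - 2) * m a + (0%:Z - 2) * m b == 0 = (m a == - m b) by apply/eqP/eqP; lia.
by case: (m a == m b); case: (m a == - m b).
Qed.

Lemma count_orth_half_tails m :
  count (orth_code m) half_tails = (4 * count (orth_code m) (words [:: 1; 3]%N 5))%N.
Proof.
rewrite count_flatten_sum big_map -sumn_count sumnE big_map big_distrr.
by apply: eq_bigr => t _; rewrite count_nseq mulnC.
Qed.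

Lemma count_perm_map_filter {T U : eqType} {f : T -> U} {q : pred T} {s t}
    (p : pred U) :
  perm_eq [seq f x | x <- s & q x] t -> count (fun x => q x && p (f x)) s = count p t.
Proof.
move=> /permP <-; rewrite count_map count_filter.
by apply: eq_count => x; rewrite /= andbC.
Qed.

Lemma n_orth_roots_tails m : n_orth_roots (lvec m) =
  (12 + count (orth_code m) single_tails + count (orth_code m) pair_tails
      + count (orth_code m) half_tails)%N.
Proof.
have orth_zero_tail : orth_code m zero_tail by rewrite /orth_code tail_dot_zero_tail.
rewrite n_orth_roots_words (count_perm_map_filter (orth_code m) root_code_tails).
(* Generalizing the explicit lists keeps the unifier from evaluating them. *)
move: single_tails pair_tails half_tails => A B C.
by rewrite !count_cat count_nseq orth_zero_tail mul1n !addnA.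
Qed.

Lemma cond_iE m : cond_i m <-> (\sum_(j < 5) (m j == 0) = 0)%N.
Proof.
rewrite /cond_i; split => [m_neq0 | /eqP].
  by apply/eqP; rewrite sum_nat_eq0; apply/forallP => j; rewrite eqb0 m_neq0.
by rewrite sum_nat_eq0 => /forallP m_neq0 j; have := m_neq0 j; rewrite eqb0.
Qed.

Lemma cond_iiE m : cond_ii m <->
  (\sum_(p : 'I_5 * 'I_5 | (p.1 < p.2)%N) ((m p.1 == m p.2) + (m p.1 == - m p.2)) = 0)%N.
Proof.
rewrite /cond_ii; split => [m_neq | /eqP].
  apply/eqP; rewrite sum_nat_eq0; apply/forall_inP => -[i j] /= /m_neq[ne1 ne2].
  by rewrite addn_eq0 !eqb0 ne1 ne2.
rewrite sum_nat_eq0 => /forall_inP m_neq i j i_lt_j.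
by have := m_neq (i, j) i_lt_j; rewrite addn_eq0 !eqb0 => /andP.
Qed.

Lemma sum_pairs_card m : cond_i m ->
  (\sum_(p : 'I_5 * 'I_5 | (p.1 < p.2)%N) ((m p.1 == m p.2) + (m p.1 == - m p.2)))%N =
  #|[set p : 'I_5 * 'I_5 | (p.1 < p.2)%N && ((m p.1 == m p.2) || (m p.1 == - m p.2))]|.
Proof.
move=> m_neq0; rewrite -sum1dep_card big_mkcondr /=; apply: eq_bigr => -[i j] _ /=.
have := m_neq0 j; case: (m i =P m j) => [eq_ij | _]; case: (m i =P - m j) => //= opp_ij.
by move=> /eqP; lia.
Qed.

Definition sign_word (s : 'I_5 -> bool) : seq nat :=
  [seq if s i then 1 else 3 | i <- enum 'I_5]%N.

Lemma tail_dot_sign_word m s :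
  tail_dot m (sign_word s) = \sum_(i < 5) (if s i then - m i else m i).
Proof.
apply: eq_bigr => i _; rewrite (nth_map i) ?size_enum_ord // nth_ord_enum.
by case: (s i); lia.
Qed.

Lemma sign_wordK w :
  w \in words [:: 1; 3]%N 5 -> sign_word (fun i => nth 0%N w i == 1%N) = w.
Proof.
rewrite mem_words => /andP[/eqP w_5 /allP w_13].
apply: (@eq_from_nth _ 0%N); first by rewrite size_map size_enum_ord w_5.
move=> k; rewrite size_map size_enum_ord => k_lt5.
rewrite -[k]/(val (Ordinal k_lt5)) (nth_map (Ordinal k_lt5)) ?size_enum_ord //.
rewrite nth_ord_enum /=.
have : nth 0%N w k \in [:: 1; 3]%N by apply: w_13; rewrite mem_nth ?w_5.
by rewrite !inE => /orP[] /eqP ->.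
Qed.

Lemma cond_iiiE m : cond_iii m <-> count (orth_code m) (words [:: 1; 3]%N 5) = 0%N.
Proof.
split => [m_iii | m_count s].
  apply/eqP; rewrite -leqn0 leqNgt -has_count; apply/hasPn => w /sign_wordK <-.
  by rewrite /orth_code tail_dot_sign_word m_iii.
have /hasPn m_iii : ~~ has (orth_code m) (words [:: 1; 3]%N 5) by rewrite has_count m_count.
rewrite -tail_dot_sign_word; apply: m_iii.
rewrite mem_words size_map size_enum_ord eqxx; apply/allP => x /mapP[i _ ->].
by case: (s i).
Qed.

Theorem proposition7p9 (m : 'I_5 -> int) (heven : (2 %| \sum_(i < 5) m i)%Z) :
  (n_orth_roots (lvec m) = 12%N <-> cond_i m /\ cond_ii m /\ cond_iii m) /\
  (cond_i m -> cond_iii m -> exactly_one_pair m -> n_orth_roots (lvec m) = 14%N).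
Proof.
(* [heven] only says that l lies in E8; the count does not depend on it. *)
rewrite n_orth_roots_tails count_orth_single_tails.
rewrite count_orth_pair_tails count_orth_half_tails.
split; first by rewrite cond_iE cond_iiE cond_iiiE; lia.
move=> m_i m_iii one_pair; rewrite sum_pairs_card // one_pair.
by move/cond_iE: m_i => ->; move/cond_iiiE: m_iii => ->.
Qed.
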